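(* Let $\mathcal{J}$ be a Jordan algebra of finite dimension $n$ over a field $\mathcal{F}$ of characteristic different from $2$, let $\Lambda=(\lambda_{i,j})_{i,j=1,\dots,n}$ be an $n\times n$ matrix all of whose entries are non-zero elements of $\mathcal{F}$, and let $\mathcal{V}$ be a basis of $\mathcal{J}$. Let $\Delta:\mathcal{J}\to\mathcal{J}$ be a map such that for every $x,y\in\mathcal{J}$ there is an automorphism $\Phi_{x,y}$ of $\mathcal{J}$ which is $\Lambda$-symmetric with respect to $\mathcal{V}$ and satisfies $\Delta(x)=\Phi_{x,y}(x)$ and $\Delta(y)=\Phi_{x,y}(y)$. Then $\Delta$ is an automorphism.
   Context: For a linear map $\psi$ on $\mathcal{J}$ and the ordered basis $\mathcal{V}=(v_1,\dots,v_n)$, the matrix of $\psi$ is $(x_{i,j})$ with $\psi(v_j)=\sum_i x_{i,j}v_i$; $\psi$ is $\Lambda$-symmetric with respect to $\mathcal{V}$ if this matrix equals $(\lambda_{i,j}a_{i,j})_{i,j}$ for some symmetric matrix $(a_{i,j})$. *)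

From mathcomp Require Import all_boot all_algebra.
Set Implicit Arguments. Unset Strict Implicit. Unset Printing Implicit Defensive.
Import GRing.Theory.
Local Open Scope ring_scope.

(* Bilinearity follows from left linearity and
   commutativity. *)
Definition is_jordan_product (F : fieldType) (J : vectType F)
    (mul : J -> J -> J) : Prop :=
  [/\ forall (a : F) (x y z : J), mul (a *: x + y) z = a *: mul x z + mul y z,
      forall x y : J, mul x y = mul y x &
      forall x y : J, mul (mul x y) (mul x x) = mul x (mul y (mul x x))].

Definition is_automorphism (F : fieldType) (J : vectType F)
    (mul : J -> J -> J) (f : J -> J) : Prop :=
  [/\ forall (a : F) (x y : J), f (a *: x + y) = a *: f x + f y,
      bijective f &
      forall x y : J, f (mul x y) = mul (f x) (f y)].

Definition mx_of_map (F : fieldType) (J : vectType F) (n : nat)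
    (vs : n.-tuple J) (psi : J -> J) : 'M[F]_n :=
  \matrix_(i < n, j < n) coord vs i (psi (tnth vs j)).

Definition lambda_symmetric (F : fieldType) (J : vectType F) (n : nat)
    (Lam : 'M[F]_n) (vs : n.-tuple J) (psi : J -> J) : Prop :=
  exists A : 'M[F]_n, A^T = A /\
    forall i j : 'I_n, mx_of_map vs psi i j = Lam i j * A i j.

From HB Require Import structures.
From mathcomp Require Import all_boot all_algebra.
Set Implicit Arguments.
Unset Strict Implicit.
Unset Printing Implicit Defensive.

Import GRing.Theory.
Local Open Scope ring_scope.

(* Taking y = v_i, the automorphism Phi_{x,v_i} agrees with Delta at v_i, so
   Delta(v_i) is the i-th column of its matrix; Lambda-symmetry with nonzero
   lambda_{ij} turns that column into the i-th row, so the i-th coordinate of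
   Delta(x) = Phi_{x,v_i}(x) is a linear form in x whose coefficients do not
   depend on x.  Hence Delta is linear.  Taking y = x x shows that Delta preserves squares,
   which by polarization (2 != 0) makes it multiplicative.  Finally
   Delta(x) = Phi_{x,x}(x) vanishes only at x = 0, and an injective linear
   endomorphism of a finite-dimensional space is bijective. *)

Definition linear_of (F : fieldType) (V : vectType F) (f : V -> V)
    (f_lin : linear f) : {linear V -> V} :=
  HB.pack f (GRing.isLinear.Build F V V *:%R f f_lin).

Section LinearEndomorphisms.
Variables (F : fieldType) (V : vectType F).

Lemma linear_ker0_bijective (f : V -> V) :
  linear f -> (forall x, f x = 0 -> x = 0) -> bijective f.
Proof.
move=> f_lin f_ker0; pose g := linfun (linear_of f_lin).
have gE x : g x = f x by rewrite lfunE.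
have g_ker0 : lker g == 0%VS.
  apply/lker0P => x y; rewrite !gE => fxy; apply/subr0_eq/f_ker0.
  by rewrite (zmod_morphism_linear f_lin) fxy subrr.
exists (g^-1%VF) => x; first by rewrite -gE lker0_lfunK.
by rewrite -gE lker0_lfunVK.
Qed.

End LinearEndomorphisms.

Section CoordinateMatrix.
Variables (F : fieldType) (J : vectType F) (n : nat) (vs : n.-tuple J).
Hypothesis vs_basis : basis_of fullv vs.

Lemma basis_coord_inj u v : (forall i, coord vs i u = coord vs i v) -> u = v.
Proof.
move=> eq_uv; rewrite (coord_basis vs_basis (memvf u)).
rewrite (coord_basis vs_basis (memvf v)).
by apply: eq_bigr => i _; rewrite eq_uv.
Qed.

Lemma coord_linear_map (f : J -> J) (x : J) (i : 'I_n) : linear f ->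
  coord vs i (f x) = \sum_j coord vs j x * mx_of_map vs f i j.
Proof.
move=> f_lin; have fE : f =1 linear_of f_lin by [].
rewrite {1}(coord_basis vs_basis (memvf x)) fE !linear_sum.
by apply: eq_bigr => j _; rewrite !linearZ mxE (tnth_nth 0).
Qed.

Lemma coord_mx_linear (f : J -> J) (c : 'M[F]_n) :
  (forall x i, coord vs i (f x) = \sum_j coord vs j x * c i j) -> linear f.
Proof.
move=> fE a x y; apply: basis_coord_inj => i.
rewrite !linearP /= !fE mulr_sumr -big_split /=.
by apply: eq_bigr => j _; rewrite linearP mulrDl mulrA.
Qed.

Lemma lambda_symmetric_mx (Lam : 'M[F]_n) (psi : J -> J) :
  lambda_symmetric Lam vs psi -> forall i j, Lam j i != 0 ->
  mx_of_map vs psi i j = Lam i j / Lam j i * mx_of_map vs psi j i.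
Proof.
case=> A [A_sym psiE] i j Lji_neq0.
have A_ji : A j i = A i j by rewrite -[in RHS]A_sym mxE.
by rewrite !psiE A_ji mulrA divfK.
Qed.

Lemma lambda_symmetric_2local_linear (Lam : 'M[F]_n) (Delta : J -> J) :
  (forall i j, Lam i j != 0) ->
  (forall x y, exists psi : J -> J, [/\ linear psi,
     lambda_symmetric Lam vs psi, Delta x = psi x & Delta y = psi y]) ->
  linear Delta.
Proof.
move=> Lam_neq0 Delta_2local.
pose c := \matrix_(i, j) (Lam i j / Lam j i * coord vs j (Delta (tnth vs i))).
apply: (@coord_mx_linear _ c) => x i.
have [psi [psi_lin psi_sym -> psi_vi]] := Delta_2local x (tnth vs i).
rewrite coord_linear_map //; apply: eq_bigr => j _.
by rewrite (lambda_symmetric_mx psi_sym) // !mxE psi_vi.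
Qed.

End CoordinateMatrix.

Section CommutativeBilinearProduct.
Variables (F : fieldType) (V : lmodType F) (mul : V -> V -> V).
Hypotheses (mulDl : left_distributive mul +%R) (mulC : commutative mul).

Lemma mul_sqrD x y :
  mul (x + y) (x + y) = mul x x + mul y y + 2%:R *: mul x y.
Proof.
rewrite mulDl ![mul _ (x + y)]mulC !mulDl (mulC y x) scaler_nat mulr2n.
by rewrite [mul x y + mul y y]addrC addrACA.
Qed.

Lemma linear_sqr_morph_mul (f : V -> V) : (2%:R : F) != 0 -> linear f ->
  (forall x, f (mul x x) = mul (f x) (f x)) ->
  forall x y, f (mul x y) = mul (f x) (f y).
Proof.
move=> two_neq0 f_lin f_sqr x y; have [fZ fD] := GRing.semilinear_linear f_lin.
have := f_sqr (x + y).
rewrite !fD !mul_sqrD !fD fZ !f_sqr => /addrI; exact: scalerI.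
Qed.

End CommutativeBilinearProduct.

Lemma jordan_product_mulDl (F : fieldType) (J : vectType F)
  (mul : J -> J -> J) : is_jordan_product mul -> left_distributive mul +%R.
Proof.
by case=> mul_lin _ _ x y z; rewrite -{1}(scale1r x) mul_lin scale1r.
Qed.

Lemma automorphism_ker0 (F : fieldType) (J : vectType F) (mul : J -> J -> J)
  (f : J -> J) (x : J) : is_automorphism mul f -> f x = 0 -> x = 0.
Proof.
case=> f_lin [g fK _] _ fx0.
have f0 : f 0 = 0 := linear0 (linear_of f_lin).
by rewrite -(fK x) fx0 -{1}f0 fK.
Qed.

Theorem theorem4p1 (F : fieldType) (hF : (2%:R : F) != 0)
  (J : vectType F) (mul : J -> J -> J) (hJ : is_jordan_product mul)
  (n : nat) (hn : \dim (fullv : {vspace J}) = n)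
  (Lam : 'M[F]_n) (hLam : forall i j : 'I_n, Lam i j != 0)
  (vs : n.-tuple J) (hvs : basis_of fullv vs)
  (Delta : J -> J)
  (hDelta : forall x y : J, exists Phi : J -> J,
      [/\ is_automorphism mul Phi, lambda_symmetric Lam vs Phi,
          Delta x = Phi x & Delta y = Phi y]) :
  is_automorphism mul Delta.
Proof.
have Delta_lin : linear Delta.
  apply: (lambda_symmetric_2local_linear hvs hLam) => x y.
  have [Phi [[Phi_lin _ _] Phi_sym -> ->]] := hDelta x y.
  by exists Phi.
have Delta_sqr x : Delta (mul x x) = mul (Delta x) (Delta x).
  by have [Phi [[_ _ Phi_mul] _ -> ->]] := hDelta (mul x x) x.
split=> //.
- apply: linear_ker0_bijective => // x.
  have [Phi [Phi_aut _ -> _]] := hDelta x x.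
  exact: automorphism_ker0 Phi_aut.
- have [_ mulC _] := hJ.
  have mulDl := jordan_product_mulDl hJ.
  exact: (linear_sqr_morph_mul mulDl mulC hF Delta_lin Delta_sqr).
Qed.
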